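(* Let $\Bbbk$ be a field of characteristic zero, let $n\geq 3$, $d\geq 2$, and $S=\Bbbk[x_1,\ldots,x_n]$. Then for every integer $\mu \in\left[2n-1, \mathrm{HF}(S,d)-\mathrm{HF}(S,d-1)\right]$ there exists an artinian monomial ideal $I$ minimally generated by $\mu$ elements of degree $d$ such that $S/I$ fails the WLP by injectivity in degree $d-1$. Moreover, this interval is non-empty except for the cases $(n,d) \in \{(4,2),(3,3),(3,2)\}$.
   Context: $\mathrm{HF}(A,k)=\dim_\Bbbk A_k$. For a monomial ideal $I$, $A=S/I$ fails the WLP in degree $i$ if $\times(x_1+\cdots+x_n): A_i\to A_{i+1}$ does not have maximal rank; it fails the WLP by injectivity in degree $i$ if in addition $\mathrm{HF}(A,i)\le \mathrm{HF}(A,i+1)$. *)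

From HB Require Import structures.
From mathcomp Require Import all_boot all_order all_algebra.
From mathcomp Require Export mpoly.
Unset Printing Implicit Defensive.
Import GRing.Theory.
Local Open Scope ring_scope.

(* S = k[x_1..x_n] is {mpoly k[n]}; monomials are 'X_{1..n} (exponent vectors). *)

Definition in_mon_ideal (k : fieldType) {n : nat} (G : seq 'X_{1..n})
  (f : {mpoly k[n]}) : Prop :=
  exists h : 'I_(size G) -> {mpoly k[n]},
    f = \sum_(j < size G) h j * 'X_[(nth 0%MM G j)].

Definition minimal_gens (k : fieldType) {n : nat} (G : seq 'X_{1..n}) : Prop :=
  uniq G /\
  forall j : 'I_(size G),
    ~ in_mon_ideal k (rem (nth 0%MM G j) G) 'X_[(nth 0%MM G j)].

Definition artinian_quot (k : fieldType) {n : nat} (G : seq 'X_{1..n}) : Prop :=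
  exists N : nat, forall m : 'X_{1..n}, (N <= mdeg m)%N ->
    in_mon_ideal k G 'X_[m].

Definition lin_form (k : fieldType) (n : nat) : {mpoly k[n]} :=
  \sum_(i < n) 'X_i.

(* "There are r elements of A_i = S_i / I_i that are k-linearly independent",
   i.e. r <= HF(S/I, i) = dim_k A_i. *)
Definition indep_in_deg (k : fieldType) {n : nat} (G : seq 'X_{1..n})
  (i r : nat) : Prop :=
  exists f : 'I_r -> {mpoly k[n]},
    (forall j, f j \is i.-homog) /\
    forall c : 'I_r -> k,
      in_mon_ideal k G (\sum_(j < r) c j *: f j) -> forall j, c j = 0.

Definition HF_le_next (k : fieldType) {n : nat} (G : seq 'X_{1..n}) (i : nat) : Prop :=
  forall r, indep_in_deg k G i r -> indep_in_deg k G i.+1 r.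

Definition mul_l_injective (k : fieldType) {n : nat} (G : seq 'X_{1..n}) (i : nat) : Prop :=
  forall f : {mpoly k[n]}, f \is i.-homog ->
    in_mon_ideal k G (lin_form k n * f) -> in_mon_ideal k G f.

Definition mul_l_surjective (k : fieldType) {n : nat} (G : seq 'X_{1..n}) (i : nat) : Prop :=
  forall g : {mpoly k[n]}, g \is i.+1.-homog ->
    exists f : {mpoly k[n]}, f \is i.-homog /\
      in_mon_ideal k G (g - lin_form k n * f).

(* maximal rank of a linear map between finite-dimensional spaces
   = injective or surjective *)
Definition fails_WLP_in_deg (k : fieldType) {n : nat} (G : seq 'X_{1..n}) (i : nat) : Prop :=
  ~ (mul_l_injective k G i \/ mul_l_surjective k G i).

Definition fails_WLP_inj_in_deg (k : fieldType) {n : nat} (G : seq 'X_{1..n}) (i : nat) : Prop :=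
  fails_WLP_in_deg k G i /\ HF_le_next k G i.

(* HF(S, d) = number of monomials of degree d in n variables
   (they form a k-basis of S_d). *)
Definition HF_S (n d : nat) : nat :=
  #|[set m : 'X_{1..n < d.+1} | mdeg m == d]|.

From HB Require Import structures.
From mathcomp Require Import all_boot all_order all_algebra.
From mathcomp Require Import mpoly.
From mathcomp Require Import zify.
Import GRing.Theory.
Local Open Scope ring_scope.
Set Implicit Arguments.
Unset Strict Implicit.

(* Let I be generated by x_0^(d-1) x_0, ..., x_0^(d-1) x_(n-1), the pure
   powers x_1^d, ..., x_(n-1)^d (2n - 1 monomials, and I is artinian) and any
   further monomials of degree d.  As I has nothing below degree d,
   A_(d-1) = S_(d-1), and l x_0^(d-1) is in I, so x l is not injective on
   A_(d-1).  The bound mu <= HF(S,d) - HF(S,d-1) means dim A_d >= dim A_(d-1),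
   whereas a surjection A_(d-1) -> A_d with nonzero kernel would give
   dim A_d < dim A_(d-1).  Finally HF(S,d) - HF(S,d-1) = C(n+d-2, n-2), and
   the non-emptiness of the interval is an estimate of this binomial. *)

Lemma size_filter_notin (T : eqType) (s G : seq T) :
  uniq s -> uniq G -> {subset G <= s} ->
  size [seq x <- s | x \notin G] = (size s - size G)%N.
Proof.
move=> s_uniq G_uniq sub_Gs.
have count_G : count (mem G) s = size G.
  rewrite -size_filter; apply/perm_size/uniq_perm; rewrite ?filter_uniq //.
  by move=> x; rewrite mem_filter andb_idr //; apply: sub_Gs.
by rewrite size_filter -count_G -(count_predC (mem G) s) addKn.
Qed.

Definition monomials_of_deg (n d : nat) : seq 'X_{1..n} :=
  [seq val m | m <- enum [set m : 'X_{1..n < d.+1} | mdeg m == d]].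

Lemma monomials_of_deg_uniq n d : uniq (monomials_of_deg n d).
Proof. by rewrite map_inj_uniq ?enum_uniq //; apply: val_inj. Qed.

Lemma mem_monomials_of_deg n d m : (m \in monomials_of_deg n d) = (mdeg m == d).
Proof.
apply/mapP/idP => [[m' ]|/eqP m_deg]; first by rewrite mem_enum inE => m'_deg ->.
have m_lt : (mdeg m < d.+1)%N by rewrite m_deg.
by exists (BMultinom m_lt); rewrite // mem_enum inE /= m_deg.
Qed.

Lemma size_monomials_of_deg n d : size (monomials_of_deg n d) = HF_S n d.
Proof. by rewrite size_map -cardE. Qed.

Lemma HF_S_binomial n e : HF_S n.+1 e = 'C(e + n, e).
Proof.
rewrite -size_monomials_of_deg -(mpoly.size_basis n e); apply/perm_size/uniq_perm.
- exact: monomials_of_deg_uniq.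
- exact: mpoly.uniq_basis.
by move=> m; rewrite mem_monomials_of_deg mpoly.basis_cover.
Qed.

Lemma homog_free_le (k : fieldType) (n e r : nat) (f : 'I_r -> {mpoly k[n.+1]}) :
  (forall j, f j \is e.-homog) ->
  (forall c : 'I_r -> k, \sum_(j < r) c j *: f j = 0 -> forall j, c j = 0) ->
  (r <= HF_S n.+1 e)%N.
Proof.
move=> f_homog f_free; rewrite HF_S_binomial.
pose X := [tuple (DHomog (f_homog j) : dhomog n.+1 k e) | j < r].
have /eqP : free X.
  apply/freeP => c /(congr1 val); rewrite raddf_sum /= => sum0 j.
  apply: f_free; rewrite -[RHS]sum0; apply: eq_bigr => i _.
  by rewrite (nth_map i) ?size_enum_ord // nth_ord_enum.
by rewrite size_tuple => <-; have := dimvS (subvf <<X>>%VS); rewrite dimvf.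
Qed.

Section MonomialIdeal.
Variables (k : fieldType) (n : nat) (G : seq 'X_{1..n}).
Local Notation I := (in_mon_ideal k G).

Lemma in_mon_ideal0 : I 0.
Proof. by exists (fun _ => 0); rewrite big1 // => j _; rewrite mul0r. Qed.

Lemma in_mon_idealD p q : I p -> I q -> I (p + q).
Proof.
move=> [h1 ->] [h2 ->]; exists (fun j => h1 j + h2 j).
by rewrite -big_split; apply: eq_bigr => j _; rewrite mulrDl.
Qed.

Lemma in_mon_idealMl q p : I p -> I (q * p).
Proof.
move=> [h ->]; exists (fun j => q * h j).
by rewrite mulr_sumr; apply: eq_bigr => j _; rewrite mulrA.
Qed.

Lemma in_mon_idealZ c p : I p -> I (c *: p).
Proof. by rewrite -mul_mpolyC; apply: in_mon_idealMl. Qed.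

Lemma in_mon_ideal_sum (J : eqType) (s : seq J) (F : J -> {mpoly k[n]}) :
  (forall j, j \in s -> I (F j)) -> I (\sum_(j <- s) F j).
Proof.
elim: s => [|a s IH] F_in; first by rewrite big_nil; apply: in_mon_ideal0.
rewrite big_cons; apply: in_mon_idealD; first by apply: F_in; rewrite mem_head.
by apply: IH => j j_s; apply: F_in; rewrite inE j_s orbT.
Qed.

Lemma in_mon_idealX g : g \in G -> I 'X_[g].
Proof.
move=> g_G; have g_lt : (index g G < size G)%N by rewrite index_mem.
exists (fun j => if j == Ordinal g_lt then 1 else 0).
rewrite (bigD1 (Ordinal g_lt)) //= eqxx mul1r nth_index // big1 ?addr0 //.
by move=> j /negbTE ->; rewrite mul0r.
Qed.

Lemma in_mon_idealXD u g : g \in G -> I 'X_[u + g].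
Proof. by move=> g_G; rewrite mpolyXD; apply/in_mon_idealMl/in_mon_idealX. Qed.

Lemma mcoeff_mon_ideal p m :
  I p -> (forall g u, g \in G -> m != (u + g)%MM) -> p@_m = 0.
Proof.
move=> [h ->] m_nomult; rewrite raddf_sum big1 // => j _ /=.
apply/eqP; apply: contraT => m_supp.
have : m \in msupp (h j * 'X_[nth 0%MM G j]) by rewrite mcoeff_msupp.
rewrite (perm_mem (msuppMX _ _)) => /mapP [u _ m_eq].
by have := m_nomult _ u (mem_nth 0%MM (ltn_ord j)); rewrite m_eq addmC eqxx.
Qed.

End MonomialIdeal.

Lemma artinian_quot_pure_powers (k : fieldType) n d (G : seq 'X_{1..n}) :
  (forall i, (U_(i) *+ d)%MM \in G) -> artinian_quot k G.
Proof.
move=> G_pow; exists (n * d.-1).+1 => m m_deg.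
have [i d_le] : exists i, (d <= m i)%N.
  apply/existsP; apply: contraT; rewrite negb_exists => /forallP m_small.
  have : (mdeg m <= \sum_(i < n) d.-1)%N.
    by rewrite mdegE; apply: leq_sum => i _; have := m_small i; lia.
  by rewrite sum_nat_const card_ord; lia.
have pow_le : (U_(i) *+ d <= m)%MM.
  by apply/mnm_lepP => j; rewrite mulmnE mnm1E; case: (i =P j) => [<-|_]; lia.
by rewrite -(submK pow_le); apply/in_mon_idealXD/G_pow.
Qed.

Section EquigeneratedIdeal.
Variables (k : fieldType) (n d : nat) (G : seq 'X_{1..n}).
Hypothesis G_deg : forall g, g \in G -> mdeg g = d.
Local Notation I := (in_mon_ideal k G).

Lemma mcoeff_mon_ideal_lt p m : I p -> (mdeg m < d)%N -> p@_m = 0.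
Proof.
move=> p_in m_lt; apply: (mcoeff_mon_ideal p_in) => g u g_G; apply/eqP => m_eq.
by move: m_lt; rewrite m_eq mdegD (G_deg g_G); lia.
Qed.

Lemma mcoeff_mon_ideal_nongen p m : I p -> mdeg m = d -> m \notin G -> p@_m = 0.
Proof.
move=> p_in m_deg m_G; apply: (mcoeff_mon_ideal p_in) => g u g_G; apply/eqP => m_eq.
have /eqP : mdeg u = 0%N by move: m_deg; rewrite m_eq mdegD (G_deg g_G); lia.
by rewrite mdeg_eq0 => /eqP u0; move: m_G; rewrite m_eq u0 add0m g_G.
Qed.

Lemma homog_mon_ideal_lt e p : (e < d)%N -> p \is e.-homog -> I p -> p = 0.
Proof.
move=> e_lt p_homog p_in; apply/mpolyP => m; rewrite mcoeff0.
have [m_deg | m_deg] := eqVneq (mdeg m) e; last exact: dhomog_nemf_coeff m_deg.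
by apply: mcoeff_mon_ideal_lt p_in _; rewrite m_deg.
Qed.

Definition nongens := [seq m <- monomials_of_deg n d | m \notin G].

Lemma mem_nongens m : (m \in nongens) = (mdeg m == d) && (m \notin G).
Proof. by rewrite mem_filter mem_monomials_of_deg andbC. Qed.

Lemma size_nongens : uniq G -> size nongens = (HF_S n d - size G)%N.
Proof.
move=> G_uniq; rewrite size_filter_notin ?monomials_of_deg_uniq //.
  by rewrite size_monomials_of_deg.
by move=> g /G_deg g_deg; rewrite mem_monomials_of_deg g_deg.
Qed.

Lemma nongens_free r (c : 'I_r -> k) : (r <= size nongens)%N ->
  I (\sum_(j < r) c j *: 'X_[nth 0%MM nongens j]) -> forall j, c j = 0.
Proof.
move=> r_le sum_in j; have j_lt := leq_trans (ltn_ord j) r_le.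
have := mem_nth 0%MM j_lt; rewrite mem_nongens => /andP [/eqP m_deg m_G].
have := mcoeff_mon_ideal_nongen sum_in m_deg m_G.
rewrite raddf_sum (bigD1 j) //= mcoeffZ mcoeffX eqxx mulr1 big1 ?addr0 //.
move=> i /negbTE i_neq.
rewrite mcoeffZ mcoeffX nth_uniq ?filter_uniq ?monomials_of_deg_uniq //.
  by rewrite (inj_eq val_inj) i_neq mulr0.
exact: leq_trans (ltn_ord i) r_le.
Qed.

End EquigeneratedIdeal.

Lemma minimal_gens_equideg (k : fieldType) n d (G : seq 'X_{1..n}) :
  (forall g, g \in G -> mdeg g = d) -> uniq G -> minimal_gens k G.
Proof.
move=> G_deg G_uniq; split=> // j g_in_rest.
have g_G : nth 0%MM G j \in G by apply: mem_nth.
have rest_deg g : g \in rem (nth 0%MM G j) G -> mdeg g = d.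
  by move/mem_rem; apply: G_deg.
have := mcoeff_mon_ideal_nongen rest_deg g_in_rest (G_deg _ g_G).
rewrite mem_rem_uniqF // mcoeffX eqxx => /(_ isT) /eqP.
by rewrite oner_eq0.
Qed.

Section WLPFailure.
Variables (k : fieldType) (n d : nat) (G : seq 'X_{1..n.+1}).
Hypotheses (G_deg : forall g, g \in G -> mdeg g = d) (G_uniq : uniq G).
Hypothesis G_x0 : forall i, (U_(ord0) *+ d.-1 + U_(i))%MM \in G.
Hypothesis G_small : (size G <= HF_S n.+1 d - HF_S n.+1 d.-1)%N.
Local Notation I := (in_mon_ideal k G).
Local Notation l := (lin_form k n.+1).
Local Notation L := (nongens d G).

Let x0 : 'X_{1..n.+1} := (U_(ord0) *+ d.-1)%MM.

Let d_gt0 : (0 < d)%N.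
Proof. by have := G_deg (G_x0 ord0); rewrite mdegD mdegMn !mdeg1 mul1n addn1 => <-. Qed.

Let x0_homog : ('X_[x0] : {mpoly k[n.+1]}) \is d.-1.-homog.
Proof. by rewrite dhomogX; apply/eqP; rewrite /= mdegMn mdeg1 mul1n. Qed.

Lemma lin_form_x0_in : I (l * 'X_[x0]).
Proof.
rewrite /lin_form mulr_suml; apply: in_mon_ideal_sum => i _.
by rewrite -mpolyXD addmC; apply: in_mon_idealX; apply: G_x0.
Qed.

Lemma x0_notin : ~ I 'X_[x0].
Proof.
have d_pred_lt : (d.-1 < d)%N by rewrite ltn_predL.
move=> /(homog_mon_ideal_lt G_deg d_pred_lt x0_homog) /(congr1 (mcoeff x0)) /eqP.
by rewrite mcoeffX eqxx mcoeff0 oner_eq0.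
Qed.

Lemma not_mul_l_injective : ~ mul_l_injective k G d.-1.
Proof. by move=> inj; apply/x0_notin/inj/lin_form_x0_in. Qed.

Lemma HF_S_pred_le_nongens : (HF_S n.+1 d.-1 <= size L)%N.
Proof.
have G_pos : (0 < size G)%N.
  by rewrite lt0n size_eq0; apply/eqP => G_nil; have := G_x0 ord0; rewrite G_nil.
by rewrite (size_nongens G_deg G_uniq); lia.
Qed.

Lemma HF_le_next_pred : HF_le_next k G d.-1.
Proof.
move=> r [f [f_homog f_free]].
have r_le : (r <= size L)%N.
  apply: leq_trans HF_S_pred_le_nongens; apply: (homog_free_le f_homog) => c sum0.
  by apply: f_free; rewrite sum0; apply: in_mon_ideal0.
exists (fun j : 'I_r => 'X_[nth 0%MM L j]); split=> [j|c].
  rewrite prednK // dhomogX.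
  by have := mem_nth 0%MM (leq_trans (ltn_ord j) r_le); rewrite mem_nongens => /andP [].
exact: (nongens_free G_deg r_le).
Qed.

(* Multiplied by l, a relation among x0 and l-preimages of the nongenerators
   becomes a relation among the nongenerators modulo I. *)
Lemma preimages_free K (f : 'I_K -> {mpoly k[n.+1]}) (c0 : k) (c : 'I_K -> k) :
  (K <= size L)%N -> (forall j : 'I_K, I ('X_[nth 0%MM L j] - l * f j)) ->
  c0 *: 'X_[x0] + \sum_(j < K) c j *: f j = 0 -> c0 = 0 /\ forall j, c j = 0.
Proof.
move=> K_le f_pre /eqP; rewrite addrC addr_eq0 -scaleNr => /eqP sum_f.
have c_0 : forall j, c j = 0.
  apply: (nongens_free G_deg K_le).
  have -> : \sum_(j < K) c j *: 'X_[nth 0%MM L j] =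
      \sum_(j < K) c j *: ('X_[nth 0%MM L j] - l * f j)
      + (- c0) *: (l * 'X_[x0]).
    rewrite scalerAr -sum_f mulr_sumr -big_split; apply: eq_bigr => j _.
    by rewrite /= -scalerAr -scalerDr subrK.
  apply: in_mon_idealD; last exact/in_mon_idealZ/lin_form_x0_in.
  by apply: in_mon_ideal_sum => j _; apply/in_mon_idealZ/f_pre.
split=> //; move: sum_f; rewrite big1 => [/(congr1 (mcoeff x0))|j _].
  rewrite mcoeffZ mcoeffX eqxx mulr1 mcoeff0 => /eqP.
  by rewrite eq_sym oppr_eq0 => /eqP.
by rewrite c_0 scale0r.
Qed.

Lemma not_mul_l_surjective : ~ mul_l_surjective k G d.-1.
Proof.
move=> surj; pose K := size L.
have preimage (j : 'I_K) : exists f : {mpoly k[n.+1]},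
    f \is d.-1.-homog /\ I ('X_[nth 0%MM L j] - l * f).
  apply: surj; rewrite prednK // dhomogX.
  by have := mem_nth 0%MM (ltn_ord j); rewrite mem_nongens => /andP [].
have [f f_pre] := fin_all_exists preimage.
pose F (j : 'I_K.+1) := oapp f 'X_[x0] (unlift ord0 j).
suff : (K.+1 <= HF_S n.+1 d.-1)%N by have := HF_S_pred_le_nongens; lia.
apply: (@homog_free_le _ _ _ _ F) => [j|c].
  by rewrite /F; case: unliftP => [j' _|_] //=; apply: (f_pre j').1.
rewrite big_ord_recl /F unlift_none /=.
under eq_bigr do rewrite liftK /=.
move=> /(preimages_free (leqnn K) (fun j => (f_pre j).2)) [c0 c_0] j.
by case: (unliftP ord0 j) => [j' ->|->].
Qed.

Theorem fails_WLP_inj_pred : fails_WLP_inj_in_deg k G d.-1.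
Proof.
split; last exact: HF_le_next_pred.
by case; [apply: not_mul_l_injective | apply: not_mul_l_surjective].
Qed.

End WLPFailure.

Section BaseGenerators.
Variables (n d : nat).

Definition base_gens : seq 'X_{1..n.+1} :=
  [seq (U_(ord0) *+ d.-1 + U_(i))%MM | i <- enum 'I_n.+1] ++
  [seq (U_(lift ord0 i) *+ d)%MM | i <- enum 'I_n].

Lemma size_base_gens : size base_gens = (2 * n.+1 - 1)%N.
Proof. by rewrite size_cat !size_map -!enumT !size_enum_ord; lia. Qed.

Lemma base_gens_x0 i : (U_(ord0) *+ d.-1 + U_(i))%MM \in base_gens.
Proof. by rewrite mem_cat; apply/orP; left; apply/mapP; exists i; rewrite ?mem_enum. Qed.

Hypothesis d_ge2 : (2 <= d)%N.

Lemma base_gens_deg m : m \in base_gens -> mdeg m = d.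
Proof.
rewrite mem_cat => /orP [] /mapP [i _ ->]; rewrite ?mdegD mdegMn !mdeg1; lia.
Qed.

Lemma base_gens_uniq : uniq base_gens.
Proof.
rewrite cat_uniq; apply/and3P; split.
- rewrite map_inj_uniq ?enum_uniq // => i j /mnmP /(_ i).
  by rewrite !mnmDE !mulmnE !mnm1E eqxx; case: (j =P i) => [->|_] //; lia.
- apply/hasPn => m /mapP [i _ ->]; apply/mapP => [[j _ /mnmP /(_ ord0)]].
  rewrite !mnmDE !mulmnE !mnm1E eqxx eq_sym.
  by have /negbTE -> := neq_lift ord0 i; lia.
- rewrite map_inj_uniq ?enum_uniq // => i j /mnmP /(_ (lift ord0 i)).
  rewrite !mulmnE !mnm1E eqxx.
  by case: (lift ord0 j =P lift ord0 i) => [/lift_inj -> //|_]; lia.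
Qed.

Lemma base_gens_pure_power i : (U_(i) *+ d)%MM \in base_gens.
Proof.
rewrite mem_cat; case: (unliftP ord0 i) => [j ->|->].
  by apply/orP; right; apply/mapP; exists j; rewrite ?mem_enum.
apply/orP; left; apply/mapP; exists ord0; rewrite ?mem_enum //.
by apply/mnmP => j; rewrite !mnmDE !mulmnE !mnm1E; case: (ord0 == j); lia.
Qed.

End BaseGenerators.

Definition pad_gens n d (G : seq 'X_{1..n}) (r : nat) : seq 'X_{1..n} :=
  G ++ take r (nongens d G).

Section PadGenerators.
Variables (n d : nat) (G : seq 'X_{1..n}).
Hypotheses (G_deg : forall g, g \in G -> mdeg g = d) (G_uniq : uniq G).

Lemma size_pad_gens r :
  (r <= HF_S n d - size G)%N -> size (pad_gens d G r) = (size G + r)%N.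
Proof. by rewrite size_cat size_take size_nongens //; case: ltnP; lia. Qed.

Lemma pad_gens_deg r m : m \in pad_gens d G r -> mdeg m = d.
Proof.
rewrite mem_cat => /orP [/G_deg //|/mem_take].
by rewrite mem_nongens => /andP [/eqP].
Qed.

Lemma pad_gens_uniq r : uniq (pad_gens d G r).
Proof.
rewrite cat_uniq G_uniq take_uniq ?filter_uniq ?monomials_of_deg_uniq //= andbT.
by apply/hasPn => m /mem_take; rewrite mem_nongens => /andP [].
Qed.

End PadGenerators.

Lemma HF_S_diff n e : (HF_S n.+2 e.+1 - HF_S n.+2 e)%N = 'C(n + e.+1, n).
Proof.
rewrite !HF_S_binomial addSn binS addnK -bin_sub; last lia.
by congr 'C(_, _); lia.
Qed.

Lemma bin2_ge c : (2 * c + 9 <= 'C(c + 5, 2))%N.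
Proof. by elim: c => [|c IH] //; rewrite addSn binS bin1; lia. Qed.

Lemma HF_S_diff_ge_iff n d : (3 <= n)%N -> (2 <= d)%N ->
  (2 * n - 1 <= HF_S n d - HF_S n (d - 1))%N <->
  ~ ((n, d) \in [:: (4, 2); (3, 3); (3, 2)]%N).
Proof.
case: n => [|[|[|a]]] //; case: d => [|[|b]] // _ _.
rewrite subSS subn0 HF_S_diff.
case: a => [|[|c]].
- by rewrite bin1; case: b => [|[|b]] /=; split => //; lia.
- case: b => [|b] //=; split=> // _.
  by apply: leq_trans (_ : 'C(5, 2) <= _)%N; rewrite // leq_bin2l //; lia.
- split=> // _; apply: leq_trans (_ : 'C(c + 5, c.+3) <= _)%N; last first.
    by apply: leq_bin2l; lia.
  have -> : 'C(c + 5, c.+3) = 'C(c + 5, 2) by rewrite -bin_sub; [congr 'C(_, _) | ]; lia.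
  by have := bin2_ge c; lia.
Qed.

Unset Implicit Arguments.

Theorem corollary4p4 (k : fieldType) (char0 : [pchar k] =i pred0)
  (n d : nat) (Hn : (3 <= n)%N) (Hd : (2 <= d)%N) :
  (forall mu : nat,
      (2 * n - 1 <= mu <= HF_S n d - HF_S n (d - 1))%N ->
      exists G : seq 'X_{1..n},
        size G = mu /\
        (forall m, m \in G -> mdeg m = d) /\
        minimal_gens k G /\
        artinian_quot k G /\
        fails_WLP_inj_in_deg k G (d - 1))
  /\
  ((2 * n - 1 <= HF_S n d - HF_S n (d - 1))%N <->
     ~ ((n, d) \in [:: (4, 2); (3, 3); (3, 2)]%N)).
Proof.
split; last exact: HF_S_diff_ge_iff.
case: n Hn => [|n] // _ mu; rewrite -(size_base_gens n d) subn1 => /andP [mu_ge mu_le].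
have B_deg : forall m, m \in base_gens n d -> mdeg m = d := base_gens_deg Hd.
have B_uniq := base_gens_uniq n Hd.
pose G := pad_gens d (base_gens n d) (mu - size (base_gens n d)).
have G_deg : forall m, m \in G -> mdeg m = d by move=> m /(pad_gens_deg B_deg).
have B_sub : {subset base_gens n d <= G} by move=> m m_B; rewrite mem_cat m_B.
have G_uniq : uniq G by apply: pad_gens_uniq.
have G_size : size G = mu by rewrite (size_pad_gens B_deg B_uniq); lia.
exists G; split=> //; split=> //; split; first exact: minimal_gens_equideg G_deg G_uniq.
split.
  by apply: artinian_quot_pure_powers => i; apply/B_sub/base_gens_pure_power.
apply: fails_WLP_inj_pred => //; last by rewrite G_size.
by move=> i; apply/B_sub/base_gens_x0.
Qed.
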